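(* Let $\Sigma\in\mathbb{R}^{p\times p}$ with $\Sigma\succ0$, $\theta_0\in\mathbb{R}^p$, $S=\mathrm{supp}(\theta_0)$, and for $\xi>0$ let $\widehat\theta^\infty(\xi)$ be the unique minimizer of $\theta\mapsto\frac12\langle\theta-\theta_0,\Sigma(\theta-\theta_0)\rangle+\xi\|\theta\|_1$. Then there exist $\xi_0=\xi_0(\Sigma,S,\theta_0)>0$, $T_0\subseteq[p]$, $v_0\in\{-1,0,+1\}^p$ such that for all $\xi\in(0,\xi_0)$, $\mathrm{sign}(\widehat\theta^\infty(\xi))=v_0$ and $\mathrm{supp}(\widehat\theta^\infty(\xi))=\mathrm{supp}(v_0)=T_0$. Further $T_0\supseteq S$, $v_{0,S}=\mathrm{sign}(\theta_{0,S})$, and $\xi_0=\min_{i\in S}\big|\theta_{0,i}/[\Sigma_{T_0,T_0}^{-1}v_{0,T_0}]_i\big|$.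
   Context: $\mathrm{sign}(u)_i=+1,0,-1$ according as $u_i>0,=0,<0$; $A_{I,J}$ is the submatrix with rows in $I$, columns in $J$; $A_{I,I}^{-1}=(A_{I,I})^{-1}$; $v_I$ is restriction to $I$. *)

From HB Require Import structures.
From mathcomp Require Import all_boot all_order all_algebra.
From mathcomp Require Import reals constructive_ereal.
Set Implicit Arguments. Unset Strict Implicit. Unset Printing Implicit Defensive.
Import Order.TTheory GRing.Theory Num.Theory.
Local Open Scope ring_scope.

Definition posdef {R : realType} {p : nat} (Sig : 'M[R]_p) : Prop :=
  Sig^T = Sig /\ forall x : 'cV[R]_p, x != 0 -> 0 < (x^T *m Sig *m x) 0 0.

Definition sgn {R : realType} {p : nat} (u : 'cV[R]_p) : 'cV[R]_p :=
  map_mx (fun x => Num.sg x) u.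

Definition supp {R : realType} {p : nat} (u : 'cV[R]_p) : {set 'I_p} :=
  [set i | u i 0 != 0].

Definition l1norm {R : realType} {p : nat} (u : 'cV[R]_p) : R :=
  \sum_(i < p) `|u i 0|.

Definition lasso_obj {R : realType} {p : nat} (Sig : 'M[R]_p) (theta0 : 'cV[R]_p)
  (xi : R) (theta : 'cV[R]_p) : R :=
  2^-1 * (((theta - theta0)^T *m (Sig *m (theta - theta0))) 0 0) + xi * l1norm theta.

(* submatrix A_{T,T}, rows/cols of T in increasing order *)
Definition submxTT {R : realType} {p : nat} (T : {set 'I_p}) (A : 'M[R]_p)
  : 'M[R]_#|T| := \matrix_(i, j) A (enum_val i) (enum_val j).

Definition subvT {R : realType} {p : nat} (T : {set 'I_p}) (v : 'cV[R]_p)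
  : 'cV[R]_#|T| := \col_i v (enum_val i) 0.

(* the entry of w : 'cV_#|T| indexed by i in T (0 if i \notin T) *)
Definition entry_at {R : realType} {p : nat} (T : {set 'I_p}) (w : 'cV[R]_#|T|)
  (i : 'I_p) : R :=
  if [pick k : 'I_#|T| | enum_val k == i] is Some k then w k 0 else 0.

Definition invSv {R : realType} {p : nat} (Sig : 'M[R]_p) (T : {set 'I_p})
  (v : 'cV[R]_p) (i : 'I_p) : R :=
  entry_at (invmx (submxTT T Sig) *m subvT T v) i.

(* |a / b| as an extended real, with the convention |a/0| = +oo *)
Definition absratio {R : realType} (a b : R) : \bar R :=
  if b == 0 then (+oo)%E else (`|a / b|)%:E.

(* The minimiser is characterised by the KKT conditions
   [|(Sig (th - th0))_i| <= xi], with equality [(Sig (th - th0))_i = - xi sg th_i] on the support,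
   and they have at most one solution because [Sig] is positive definite.  The KKT conditions
   force [|th - th0| = O(xi)], so for some small [s] the minimiser [th(s)] has the sign of [th0]
   on [S]; put [v0 = sgn th(s)], [T0 = supp v0].  The equalities on [T0] then give the closed form
   [th(s) = th0 - s w] with [w = Sig_{T0,T0}^-1 v0_{T0}] padded by zeros.  On the ray
   [th0 - xi w] the residual [Sig (th - th0)] is the one at [s] scaled by [xi / s], so the KKT
   conditions hold as long as no sign changes.  Off [S] the sign of [- xi w_i] does not depend on
   [xi], and on [S] it is preserved exactly when [xi |w_i| < |th0_i|], which yields [xi0]. *)

From HB Require Import structures.
From mathcomp Require Import all_boot all_order all_algebra.
From mathcomp Require Import reals constructive_ereal.
From mathcomp Require Import ring lra.

Set Implicit Arguments.
Unset Strict Implicit.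
Unset Printing Implicit Defensive.

Import Order.TTheory GRing.Theory Num.Theory.
Local Open Scope ring_scope.

Section ScalarFacts.
Variable R : realFieldType.
Implicit Types a b c d s t x xi : R.

Lemma ge0_of_quadratic_ge0 c b d : 0 < d ->
  (forall t, 0 < t -> t <= d -> 0 <= t * c + t ^+ 2 * b) -> 0 <= c.
Proof.
move=> d0 H; rewrite leNgt; apply/negP => c0.
have hb : 0 < `|b| + 1 by rewrite ltr_pwDr // normr_ge0.
set t := Num.min d (- c / (`|b| + 1)).
have t0 : 0 < t by rewrite lt_min d0 divr_gt0 // oppr_gt0.
have tc : t * (`|b| + 1) <= - c by rewrite -ler_pdivlMr // ge_min lexx orbT.
have tb : t * t * b <= t * t * `|b| by rewrite ler_wpM2l ?ler_norm // mulr_ge0 // ltW.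
have td : t <= d by rewrite ge_min lexx.
have := H t t0 td.
have : t * (t * (`|b| + 1)) <= t * (- c) by rewrite ler_wpM2l // ltW.
rewrite expr2; nra.
Qed.

Lemma sgr_eq_of_lt_norm a b : `|a - b| < `|b| -> Num.sg a = Num.sg b.
Proof.
rewrite ltr_norml; case: (ltrgt0P b) => hb /andP [h1 h2].
- by rewrite (gtr0_sg hb) gtr0_sg //; lra.
- by rewrite (ltr0_sg hb) ltr0_sg //; lra.
- by lra.
Qed.

Lemma normrD_small x t : `|t| <= `|x| -> `|x + t| = `|x| + Num.sg x * t.
Proof.
rewrite ler_norml; case: (ltrgt0P x) => hx /andP [h1 h2].
- by rewrite gtr0_sg // ger0_norm; lra.
- by rewrite ltr0_sg // ler0_norm; lra.
- have -> : t = 0 by lra.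
  by rewrite hx addr0 normr0 mulr0 addr0.
Qed.

Lemma local_min_subgradient a b xi x : 0 < xi ->
  (forall t, 0 <= t * a + t ^+ 2 * b + xi * (`|x + t| - `|x|)) ->
  `|a| <= xi /\ (x != 0 -> a = - xi * Num.sg x).
Proof.
move=> xi0 H.
have [x0 | x0] := eqVneq x 0.
  have hp : 0 <= a + xi.
    apply: (@ge0_of_quadratic_ge0 _ b 1) => // t t0 _.
    by move: (H t); rewrite x0 normr0 subr0 add0r gtr0_norm //; lra.
  have hn : 0 <= - a + xi.
    apply: (@ge0_of_quadratic_ge0 _ b 1) => // t t0 _.
    by move: (H (- t)); rewrite x0 normr0 subr0 add0r normrN gtr0_norm // sqrrN; lra.
  by split=> //; rewrite ler_norml; lra.
have x_gt0 : 0 < `|x| by rewrite normr_gt0.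
have hp : 0 <= a + xi * Num.sg x.
  apply: (@ge0_of_quadratic_ge0 _ b `|x|) => // t t0 tx.
  by move: (H t); rewrite normrD_small ?(gtr0_norm t0) //; lra.
have hn : 0 <= - (a + xi * Num.sg x).
  apply: (@ge0_of_quadratic_ge0 _ b `|x|) => // t t0 tx.
  by move: (H (- t)); rewrite normrD_small ?normrN ?(gtr0_norm t0) // sqrrN; lra.
have -> : a = - xi * Num.sg x by lra.
by rewrite normrM normrN (gtr0_norm xi0) normr_sg x0 mulr1.
Qed.

Lemma subgradient_abs xi g x y : `|g| <= xi -> (x != 0 -> g = - xi * Num.sg x) ->
  0 <= (y - x) * g + xi * (`|y| - `|x|).
Proof.
move=> hg hx; have xi0 : 0 <= xi := le_trans (normr_ge0 _) hg.
have hy : - (y * g) <= `|y| * xi.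
  by apply: le_trans (ler_norm _) _; rewrite normrN normrM ler_wpM2l.
have [-> | x0] := eqVneq x 0; first by rewrite subr0 normr0 subr0; lra.
rewrite (hx x0).
have hx' : xi * (Num.sg x * x) = xi * `|x| by rewrite -normrEsg.
have hsy : Num.sg x * y <= `|y|.
  by apply: le_trans (ler_norm _) _; rewrite normrM normr_sg x0 mul1r.
have : xi * (Num.sg x * y) <= xi * `|y| by rewrite ler_wpM2l.
nra.
Qed.

Lemma sgr_sub_scale a b s t : 0 < s -> 0 < t ->
  (a != 0 -> Num.sg (a - s * b) = Num.sg a /\ t * `|b| < `|a|) ->
  Num.sg (a - t * b) = Num.sg (a - s * b).
Proof.
move=> s0 t0 h; have [-> | a0] := eqVneq a 0.
  by rewrite !sub0r -!mulrN !sgrM (gtr0_sg s0) (gtr0_sg t0).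
have [-> tb] := h a0; apply: sgr_eq_of_lt_norm.
by rewrite addrAC subrr add0r normrN normrM gtr0_norm.
Qed.

End ScalarFacts.

Lemma supp_sgn {R : realType} {p : nat} (u : 'cV[R]_p) : supp (sgn u) = supp u.
Proof. by apply/setP => i; rewrite !inE mxE sgr_eq0. Qed.

Definition bform {R : comRingType} {p : nat} (Sig : 'M[R]_p) (x y : 'cV[R]_p) : R :=
  (x^T *m (Sig *m y)) 0 0.

Section BilinearForm.
Variables (R : comRingType) (p : nat) (Sig : 'M[R]_p).
Implicit Types x y z : 'cV[R]_p.

Lemma bformE x y : bform Sig x y = \sum_i x i 0 * (Sig *m y) i 0.
Proof. by rewrite /bform mxE; apply: eq_bigr => i _; rewrite mxE. Qed.

Lemma bformDl x y z : bform Sig (x + y) z = bform Sig x z + bform Sig y z.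
Proof. by rewrite !bformE -big_split; apply: eq_bigr => i _; rewrite mxE mulrDl. Qed.

Lemma bformDr x y z : bform Sig z (x + y) = bform Sig z x + bform Sig z y.
Proof. by rewrite /bform !mulmxDr mxE. Qed.

Lemma bformZl a x y : bform Sig (a *: x) y = a * bform Sig x y.
Proof. by rewrite !bformE mulr_sumr; apply: eq_bigr => i _; rewrite mxE mulrA. Qed.

Lemma bformZr a x y : bform Sig x (a *: y) = a * bform Sig x y.
Proof. by rewrite /bform -!scalemxAr mxE. Qed.

Lemma bformC x y : Sig^T = Sig -> bform Sig x y = bform Sig y x.
Proof.
move=> hS; rewrite /bform.
have -> : (x^T *m (Sig *m y)) 0 0 = ((x^T *m (Sig *m y))^T) 0 0 by rewrite [RHS]mxE.
by rewrite !trmx_mul trmxK hS mulmxA.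
Qed.

Lemma bform_deltal (i : 'I_p) y : bform Sig (delta_mx i 0) y = (Sig *m y) i 0.
Proof. by rewrite /bform trmx_delta -rowE mxE. Qed.

Lemma bform_delta_mx (i : 'I_p) : bform Sig (delta_mx i 0) (delta_mx i 0) = Sig i i.
Proof. by rewrite bform_deltal -colE mxE. Qed.

Lemma bformDD x y :
  bform Sig (x + y) (x + y) = bform Sig x x + bform Sig x y + bform Sig y x + bform Sig y y.
Proof. by rewrite !bformDl !bformDr; ring. Qed.

End BilinearForm.

Definition lasso_kkt {R : realType} {p : nat} (Sig : 'M[R]_p) (th0 : 'cV[R]_p) (xi : R)
  (th : 'cV[R]_p) : Prop :=
  forall i, `|(Sig *m (th - th0)) i 0| <= xi /\
    (th i 0 != 0 -> (Sig *m (th - th0)) i 0 = - xi * Num.sg (th i 0)).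

Section LassoOptimality.
Variables (R : realType) (p : nat) (Sig : 'M[R]_p) (th0 : 'cV[R]_p).
Implicit Types th : 'cV[R]_p.

Lemma lasso_objE xi th :
  lasso_obj Sig th0 xi th = 2^-1 * bform Sig (th - th0) (th - th0) + xi * l1norm th.
Proof. by []. Qed.

Lemma l1norm_add_delta th (i : 'I_p) (t : R) :
  l1norm (th + t *: delta_mx i 0) = l1norm th - `|th i 0| + `|th i 0 + t|.
Proof.
rewrite /l1norm (bigD1 i) //= [in RHS](bigD1 i) //= !mxE eqxx mulr1.
rewrite (eq_bigr (fun j => `|th j 0|)) => [|j hj]; first by ring.
by rewrite !mxE (negbTE hj) mulr0 addr0.
Qed.

Lemma lasso_min_kkt xi th : Sig^T = Sig -> 0 < xi ->
  (forall th', lasso_obj Sig th0 xi th <= lasso_obj Sig th0 xi th') ->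
  lasso_kkt Sig th0 xi th.
Proof.
move=> hS xi0 hmin i; apply: (@local_min_subgradient _ _ (2^-1 * Sig i i)) => // t.
have := hmin (th + t *: delta_mx i 0).
rewrite !lasso_objE l1norm_add_delta addrAC (bformDD Sig (th - th0)) !bformZl !bformZr.
rewrite bform_delta_mx (bformC (th - th0) (delta_mx i 0) hS) bform_deltal.
lra.
Qed.

Lemma lasso_kkt_unique xi th th' : posdef Sig -> lasso_kkt Sig th0 xi th ->
  lasso_obj Sig th0 xi th' <= lasso_obj Sig th0 xi th -> th' = th.
Proof.
move=> [hS hpd] hK hle; set h := th' - th; set d := th - th0.
have hd : th' - th0 = d + h by rewrite /d /h addrCA addrAC subrr add0r.
have hsub : 0 <= bform Sig h d + xi * (l1norm th' - l1norm th).
  rewrite bformE /l1norm -sumrB mulr_sumr -big_split /= sumr_ge0 // => i _.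
  have [hg hx] := hK i; rewrite /h mxE [(- th) i 0]mxE; exact: subgradient_abs.
move: hle; rewrite !lasso_objE hd bformDD (bformC d h hS) => hle.
apply/eqP; rewrite -subr_eq0 -/h; apply/negPn/negP => /hpd.
by rewrite -mulmxA -/(bform Sig h h); lra.
Qed.

End LassoOptimality.

Lemma posdef_unitmx {R : realType} {p : nat} (Sig : 'M[R]_p) :
  posdef Sig -> Sig \in unitmx.
Proof.
move=> [_ hpd]; rewrite -row_free_unit; apply/inj_row_free => v hv.
apply/eqP; rewrite -trmx_eq0; apply/negPn/negP => /hpd.
by rewrite trmxK hv mul0mx mxE ltxx.
Qed.

Definition extvT {R : realType} {p : nat} (T : {set 'I_p}) (x : 'cV[R]_#|T|) : 'cV[R]_p :=
  \col_i entry_at x i.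

Section Extension.
Variables (R : realType) (p : nat) (T : {set 'I_p}).
Implicit Types (x : 'cV[R]_#|T|) (y : 'cV[R]_p).

Lemma extvT_enum_val x l : extvT x (enum_val l) 0 = x l 0.
Proof.
rewrite mxE /entry_at; case: pickP => [k /eqP /enum_val_inj -> // | hn].
by have := hn l; rewrite eqxx.
Qed.

Lemma extvT_notin x j : j \notin T -> extvT x j 0 = 0.
Proof.
move=> hj; rewrite mxE /entry_at; case: pickP => [k /eqP hk | //].
by move: (enum_valP k); rewrite hk (negbTE hj).
Qed.

Lemma subvT_extvT x : subvT T (extvT x) = x.
Proof. by apply/matrixP => l k; rewrite (ord1 k) mxE extvT_enum_val. Qed.

Lemma extvT_subvT y : (forall j, j \notin T -> y j 0 = 0) -> extvT (subvT T y) = y.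
Proof.
move=> hy; apply/matrixP => i k; rewrite (ord1 k).
have [hi | hi] := boolP (i \in T); last by rewrite extvT_notin // hy.
by rewrite -(enum_rankK_in hi hi) extvT_enum_val mxE.
Qed.

Lemma extvTZ (a : R) x : extvT (a *: x) = a *: extvT x.
Proof.
apply/matrixP => i k; rewrite (ord1 k) [RHS]mxE.
have [hi | hi] := boolP (i \in T); last by rewrite !extvT_notin // mulr0.
by rewrite -(enum_rankK_in hi hi) !extvT_enum_val mxE.
Qed.

Lemma mulmx_extvT (Sig : 'M[R]_p) x l :
  (Sig *m extvT x) (enum_val l) 0 = (submxTT T Sig *m x) l 0.
Proof.
rewrite !mxE (bigID (mem T)) /= [X in _ + X]big1 => [|i /extvT_notin ->]; last first.
  by rewrite mulr0.
by rewrite addr0 big_enum_val; apply: eq_bigr => l' _; rewrite extvT_enum_val !mxE.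
Qed.

Lemma bform_extvT (Sig : 'M[R]_p) (x y : 'cV[R]_#|T|) :
  bform Sig (extvT x) (extvT y) = bform (submxTT T Sig) x y.
Proof.
rewrite !bformE (bigID (mem T)) /= [X in _ + X]big1 => [|i /extvT_notin ->]; last first.
  by rewrite mul0r.
by rewrite addr0 big_enum_val; apply: eq_bigr => l _; rewrite extvT_enum_val mulmx_extvT.
Qed.

Lemma posdef_submxTT (Sig : 'M[R]_p) : posdef Sig -> posdef (submxTT T Sig).
Proof.
move=> [hS hpd]; split.
  by apply/matrixP => l l'; rewrite !mxE -[in RHS]hS mxE.
move=> x x0; rewrite -mulmxA -/(bform _ x x) -bform_extvT /bform mulmxA.
apply: hpd; apply: contraNneq x0 => hx.
by rewrite -(subvT_extvT x) hx; apply/eqP/matrixP => l k; rewrite !mxE.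
Qed.

End Extension.

Section LassoSolution.
Variables (R : realType) (p : nat) (Sig : 'M[R]_p) (th0 : 'cV[R]_p).
Implicit Types th : 'cV[R]_p.

Lemma lasso_kkt_closed_form xi th : posdef Sig -> supp th0 \subset supp th ->
  lasso_kkt Sig th0 xi th ->
  th = th0 - xi *: \col_i invSv Sig (supp th) (sgn th) i.
Proof.
move=> hP sub0 hK; set T := supp th; set M := submxTT T Sig.
have dT j : j \notin T -> (th - th0) j 0 = 0.
  move=> hj; have hj0 : j \notin supp th0 by apply: contra hj; apply/subsetP.
  by move: hj hj0; rewrite !inE !negbK !mxE => /eqP -> /eqP ->; rewrite subrr.
have hM : M *m subvT T (th - th0) = - xi *: subvT T (sgn th).
  apply/matrixP => l k; rewrite (ord1 k) -mulmx_extvT extvT_subvT //.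
  have hl : th (enum_val l) 0 != 0 by move: (enum_valP l); rewrite inE.
  by rewrite ((hK _).2 hl) !mxE.
have hd : subvT T (th - th0) = - xi *: (invmx M *m subvT T (sgn th)).
  by rewrite scalemxAr -hM mulKmx // posdef_unitmx //; apply: posdef_submxTT.
by rewrite -[LHS](subrK th0) -(extvT_subvT dT) hd extvTZ scaleNr addrC.
Qed.

Lemma lasso_kkt_rescale s t th th' : 0 < s -> 0 < t -> lasso_kkt Sig th0 s th ->
  th' - th0 = (t / s) *: (th - th0) -> sgn th' = sgn th -> lasso_kkt Sig th0 t th'.
Proof.
move=> s0 t0 hK hd hsg i; have [hs hx] := hK i.
have sg_i : Num.sg (th' i 0) = Num.sg (th i 0).
  by move/matrixP: hsg => /(_ i 0); rewrite !mxE.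
have ts0 : 0 <= t / s by rewrite divr_ge0 // ltW.
rewrite hd -scalemxAr mxE; split.
  rewrite normrM (ger0_norm ts0); apply: le_trans (ler_wpM2l ts0 hs) _.
  by rewrite divfK // gt_eqF.
rewrite -sgr_eq0 sg_i sgr_eq0 => /hx ->.
by field; rewrite gt_eqF.
Qed.

Lemma lasso_kkt_dev_bound xi th : Sig \in unitmx -> lasso_kkt Sig th0 xi th ->
  forall i, `|th i 0 - th0 i 0| <= xi * \sum_k \sum_j `|invmx Sig k j|.
Proof.
move=> hU hK i.
have -> : th i 0 - th0 i 0 = (invmx Sig *m (Sig *m (th - th0))) i 0.
  by rewrite mulKmx // !mxE.
rewrite mxE; apply: le_trans (ler_norm_sum _ _ _) _.
apply: (@le_trans _ _ (\sum_j `|invmx Sig i j| * xi)).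
  by apply: ler_sum => j _; rewrite normrM ler_wpM2l // (hK j).1.
rewrite -mulr_suml mulrC ler_wpM2l //; first exact: le_trans (normr_ge0 _) (hK i).1.
by rewrite [X in _ <= X](bigD1 i) //= lerDl sumr_ge0 // => k _; apply: sumr_ge0.
Qed.

Lemma lasso_kkt_sgn_small : Sig \in unitmx -> exists2 s, 0 < s &
  forall th, lasso_kkt Sig th0 s th ->
  forall i, i \in supp th0 -> Num.sg (th i 0) = Num.sg (th0 i 0).
Proof.
move=> hU; set C := \sum_i \sum_j `|invmx Sig i j|.
have C0 : 0 <= C by apply: sumr_ge0 => i _; apply: sumr_ge0.
set m := \big[Order.min/1]_(i in supp th0) `|th0 i 0|.
have m0 : 0 < m by apply/bigmin_gtP; split=> // i; rewrite inE normr_gt0.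
exists (m / (C + 1)) => [|th hK i hi]; first by rewrite divr_gt0 // ltr_wpDl.
apply: sgr_eq_of_lt_norm; apply: le_lt_trans (lasso_kkt_dev_bound hU hK i) _.
have m_le : m <= `|th0 i 0| by apply: bigmin_le_cond.
apply: lt_le_trans m_le; rewrite -/C mulrAC ltr_pdivrMr ?ltr_wpDl //.
by rewrite mulrDr mulr1 ltrDl.
Qed.

Lemma lasso_kkt_ray w s t th : 0 < s -> 0 < t -> th = th0 - s *: w ->
  lasso_kkt Sig th0 s th ->
  (forall i, th0 i 0 != 0 -> Num.sg (th i 0) = Num.sg (th0 i 0) /\ t * `|w i 0| < `|th0 i 0|) ->
  lasso_kkt Sig th0 t (th0 - t *: w) /\ sgn (th0 - t *: w) = sgn th.
Proof.
move=> s0 t0 thE hK hsupp.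
have hsg : sgn (th0 - t *: w) = sgn th.
  apply/matrixP => i k; rewrite (ord1 k) thE !mxE; apply: sgr_sub_scale => // /hsupp.
  by rewrite thE !mxE.
split => //; apply: (lasso_kkt_rescale s0 t0 hK _ hsg).
rewrite thE addrAC subrr add0r [in RHS]addrAC subrr add0r scalerN scalerA.
by rewrite divfK // gt_eqF.
Qed.

End LassoSolution.

Section AbsRatio.
Variable R : realType.
Implicit Types a b t : R.

Lemma absratio_gt0 a b : a != 0 -> (0 < absratio a b)%E.
Proof.
move=> a0; rewrite /absratio; have [_ | b0] := eqVneq b 0; first exact: lt0y.
by apply: lte_tofin; rewrite normr_gt0 mulf_neq0 ?invr_eq0.
Qed.

Lemma ltr_absratio t a b : a != 0 -> (t%:E < absratio a b)%E -> t * `|b| < `|a|.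
Proof.
move=> a0; rewrite /absratio; have [-> _ | b0] := eqVneq b 0.
  by rewrite normr0 mulr0 normr_gt0.
by rewrite lte_fin normf_div ltr_pdivlMr // normr_gt0.
Qed.

End AbsRatio.

Theorem lemma3p2 (R : realType) (p : nat) (Sig : 'M[R]_p) (theta0 : 'cV[R]_p)
  (thetahat : R -> 'cV[R]_p) :
  posdef Sig ->
  (forall xi : R, 0 < xi -> forall theta : 'cV[R]_p,
     lasso_obj Sig theta0 xi (thetahat xi) <= lasso_obj Sig theta0 xi theta) ->
  let S := supp theta0 in
  exists (xi0 : \bar R) (T0 : {set 'I_p}) (v0 : 'cV[R]_p),
    (forall i : 'I_p, v0 i 0 \in [:: -1; 0; 1]) /\
    [/\ (0 < xi0)%E,
        (forall xi : R, 0 < xi -> (xi%:E < xi0)%E ->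
           sgn (thetahat xi) = v0 /\ supp (thetahat xi) = supp v0 /\ supp v0 = T0),
        S \subset T0,
        (forall i : 'I_p, i \in S -> v0 i 0 = Num.sg (theta0 i 0))
      & xi0 = \big[Order.min/(+oo)%E]_(i in S) absratio (theta0 i 0) (invSv Sig T0 v0 i)].
Proof.
move=> hP hmin S.
have hK xi : 0 < xi -> lasso_kkt Sig theta0 xi (thetahat xi).
  by move=> xi0; exact: (lasso_min_kkt hP.1 xi0 (hmin xi xi0)).
have [s s0 sgS] := lasso_kkt_sgn_small theta0 (posdef_unitmx hP).
set th := thetahat s; set v0 := sgn th; set T0 := supp v0.
have sg_th i : i \in S -> Num.sg (th i 0) = Num.sg (theta0 i 0) by apply: sgS (hK s s0) i.
have ST : S \subset T0.
  apply/subsetP => i hi; rewrite /T0 /v0 supp_sgn inE -sgr_eq0 sg_th // sgr_eq0.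
  by move: hi; rewrite inE.
set w := \col_i invSv Sig T0 v0 i.
have thE : th = theta0 - s *: w.
  rewrite /w /T0 /v0 supp_sgn; apply: lasso_kkt_closed_form => //; last exact: hK.
  by rewrite -[supp th]supp_sgn.
exists (\big[Order.min/+oo%E]_(i in S) absratio (theta0 i 0) (invSv Sig T0 v0 i)), T0, v0.
split; first by move=> i; rewrite mxE; case: sgrP => _; rewrite !inE eqxx ?orbT.
split=> //; last by move=> i hi; rewrite mxE sg_th.
  by apply/bigmin_gtP; split=> [|i]; [exact: ltry | rewrite inE; apply: absratio_gt0].
move=> xi xi0 xi_lt.
have [hKxi sg_xi] : lasso_kkt Sig theta0 xi (theta0 - xi *: w) /\ sgn (theta0 - xi *: w) = v0.
  apply: (lasso_kkt_ray s0 xi0 thE (hK s s0)) => i hi; split; first by apply: sg_th; rewrite inE.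
  rewrite [w i 0]mxE; apply: (ltr_absratio hi); apply: (lt_le_trans xi_lt).
  by apply: bigmin_le_cond; rewrite inE.
have -> : thetahat xi = theta0 - xi *: w.
  exact: lasso_kkt_unique hP hKxi (hmin xi xi0 _).
by rewrite sg_xi -supp_sgn sg_xi.
Qed.
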